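(* For all integers $a\ge1$, $b\ge2$ and every positive integer $t$, $$i((1,1,a,b),t)+i((1,1,b-1,a+1),t)=(t+2)\,F(a+1,b,0,t).$$
   Context: For $S,T\subseteq[n]$, write $T\le S$ if $|T|=|S|$ and the $i$-th smallest element of $T$ is at most the $i$-th smallest element of $S$ for each $i$. The Schubert matroid $\mathrm{SM}_n(S)$ is the matroid on $[n]$ with bases $\{T\subseteq[n]:T\le S\}$; $i(M,t)$ is the number of lattice points in the $t$-th dilate of the matroid polytope $\mathrm{conv}\{\sum_{b\in B}e_b: B\text{ a basis of }M\}$. For a sequence $r=(r_1,\dots,r_{2m})$ of integers with $r_1\ge0$, $r_i>0$ for $i\ge2$, let $n=\sum r_i$ and let $S\subseteq[n]$ have indicator vector $(0^{r_1},1^{r_2},\dots,0^{r_{2m-1}},1^{r_{2m}})$ ($x^p$ = $p$ consecutive copies of $x$); $i(r,t):=i(\mathrm{SM}_n(S),t)$. For integers $a,b\ge0$ with $a+b\ge1$, $c\in\mathbb Z$, $t\ge0$: $F(a,b,c,t)=\sum_{j=0}^{a+b}(-1)^j\binom{a+b}{j}\binom{(t+1)(b-j)+a+c-1}{a+b-1}$, with $\binom00=1$ and $\binom NK=0$ if $K<0$ or $N<K$. *)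

From HB Require Import structures.
From mathcomp Require Import all_boot all_order all_algebra.
From mathcomp Require Import boolp reals Rstruct.
Set Implicit Arguments. Unset Strict Implicit. Unset Printing Implicit Defensive.
Import Order.TTheory GRing.Theory Num.Theory.

Local Open Scope ring_scope.

(* Ground set [n] is modelled by 'I_n (0-based, order preserving shift). *)

Definition sorted_elems (n : nat) (T : {set 'I_n}) : seq nat :=
  sort leq [seq val i | i <- enum T].

Definition gale_le (n : nat) (T S : {set 'I_n}) : bool :=
  (#|T| == #|S|)%N && all2 leq (sorted_elems T) (sorted_elems S).

Definition schubert_basis (n : nat) (S : {set 'I_n}) (B : {set 'I_n}) : bool :=
  gale_le B S.

Definition in_dilate (n : nat) (isB : {set 'I_n} -> bool) (t : nat)
    (x : 'I_n -> nat) : Prop :=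
  exists lam : {set 'I_n} -> Rdefinitions.R,
    (forall B, 0 <= lam B) /\
    (forall B, ~~ isB B -> lam B = 0) /\
    (\sum_(B : {set 'I_n}) lam B = 1) /\
    (forall j : 'I_n,
        (x j)%:R = t%:R * \sum_(B : {set 'I_n} | isB B) lam B * (j \in B)%:R).

(* Every such lattice point has coordinates in {0,...,t} (the polytope lies in
   [0,1]^n), so counting inside the box {0..t}^n counts all of them. *)
Definition ehrhart_count (n : nat) (isB : {set 'I_n} -> bool) (t : nat) : nat :=
  #|[set x : {ffun 'I_n -> 'I_t.+1} |
       `[< in_dilate isB t (fun j => nat_of_ord (x j)) >] ]|.

Definition i_schubert (n : nat) (S : {set 'I_n}) (t : nat) : nat :=
  ehrhart_count (schubert_basis S) t.

(* The indicator word (0^{r_1},1^{r_2},...,0^{r_{2m-1}},1^{r_{2m}}). *)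
Definition r_word (r : seq nat) : seq bool :=
  flatten [seq nseq (nth 0%N r k) (odd k) | k <- iota 0 (size r)].

Definition r_set (r : seq nat) : {set 'I_(sumn r)} :=
  [set i : 'I_(sumn r) | nth false (r_word r) i].

Definition i_r (r : seq nat) (t : nat) : nat := i_schubert (r_set r) t.

Definition binomZ (N K : int) : int :=
  if (K < 0) || (N < K) then 0 else ('C(`|N|%N, `|K|%N))%:Z.

Definition F (a b : nat) (c : int) (t : nat) : int :=
  \sum_(j < (a + b).+1)
     (-1) ^+ j * ('C(a + b, j))%:Z *
     binomZ ((t.+1)%:Z * (b%:Z - j%:Z) + a%:Z + c - 1) ((a + b)%:Z - 1).

(* For S = {1} U {n - c, ..., n - 1} (0-based), a set is Gale-below S iff it has
   c + 1 elements and meets {0, 1}.  A lattice point of the t-th dilate of the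
   Schubert matroid polytope is therefore exactly a point x of [0, t]^n with
   \sum x = t (c + 1) and x_0 + x_1 >= t: necessity by averaging, sufficiency by
   cutting x into t bases along the residues mod t of its prefix sums.  Fixing
   (x_0, x_1) = (u, v) expresses both Ehrhart numbers through the numbers
   W(m, s) of points of [0, t]^m with coordinate sum s: over u + v >= t for the
   first, and, after reversing all coordinates, over u + v <= t for the second.
   Together they count every W(a + b, t b - w), w <= t, exactly t + 2 times,
   which gives (t + 2) W(a + b + 1, t b); and W satisfies the
   inclusion-exclusion formula F. *)

From mathcomp Require Import all_boot all_order all_algebra.
From mathcomp Require Import boolp Rstruct.
From mathcomp Require Import zify ring.
Set Implicit Arguments. Unset Strict Implicit. Unset Printing Implicit Defensive.
Import GRing.Theory Num.Theory.

Lemma card_sum_indicator (T : finType) (A : {set T}) : #|A| = \sum_j (j \in A : nat).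
Proof. by rewrite -sum1_card big_mkcond /=; apply: eq_bigr => j _; case: (j \in A). Qed.

(** * Gale order *)

Lemma sorted_ltn_enum n (T : {set 'I_n}) : sorted ltn (map val (enum T)).
Proof.
apply: (subseq_sorted ltn_trans _ (iota_ltn_sorted 0 n)).
rewrite -val_enum_ord; apply: map_subseq.
rewrite enumT; exact: filter_subseq.
Qed.

Lemma sorted_elemsE n (T : {set 'I_n}) : sorted_elems T = map val (enum T).
Proof.
rewrite /sorted_elems sorted_sort //; first exact: leq_trans.
by apply: sub_sorted (sorted_ltn_enum T) => x y; exact: ltnW.
Qed.

Lemma mem_map_val_enum n (B : {set 'I_n}) v :
  (v \in map val (enum B)) = [exists j : 'I_n, (j \in B) && (val j == v)].
Proof.
apply/mapP/existsP => [[j jB ->]|[j /andP[jB /eqP <-]]].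
  by exists j; rewrite -mem_enum jB eqxx.
by exists j; rewrite ?mem_enum.
Qed.

Lemma sorted_ltn_head_size n y s :
  sorted ltn (y :: s) -> all (fun v => v < n) (y :: s) -> y + size s < n.
Proof.
elim: s y => [|z s IH] y /=; first by rewrite addn0 andbT.
move=> /andP[yz sorted_s] /andP[_ s_lt_n]; have := IH z sorted_s s_lt_n; lia.
Qed.

Lemma all2_leq_top_iota n s :
  sorted ltn s -> all (fun v => v < n) s -> all2 leq s (iota (n - size s) (size s)).
Proof.
elim: s => [|y s IH] //= sorted_ys /andP[yn s_lt_n].
have := sorted_ltn_head_size sorted_ys (introT andP (conj yn s_lt_n)) => ys_n.
have -> : (n - (size s).+1).+1 = n - size s by lia.
rewrite (IH (path_sorted sorted_ys) s_lt_n) andbT; lia.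
Qed.

Definition hits_prefix n (p k : nat) (B : {set 'I_n}) : bool :=
  (#|B| == k) && [exists j : 'I_n, (j < p) && (j \in B)].

Lemma map_val_enum_single_top n q c (S : {set 'I_n}) : q.+1 + c <= n ->
  (forall i : 'I_n, (i \in S) = (val i == q) || (n - c <= i)) ->
  map val (enum S) = q :: iota (n - c) c.
Proof.
move=> qcn memS; apply: (irr_sorted_eq ltn_trans ltnn (sorted_ltn_enum S)).
  case: c qcn {memS} => //= c qcn.
  by apply/andP; split; [lia | exact: (iota_ltn_sorted (n - c.+1) c.+1)].
move=> v; rewrite mem_map_val_enum inE mem_iota; apply/existsP/idP.
  case=> j /andP[]; rewrite memS => jS /eqP <-.
  by have := ltn_ord j; case: eqP jS => [->|_] /= jS; lia.
move=> vS; have vn : v < n by case: eqP vS => [->|_] /= vS; lia.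
exists (Ordinal vn); rewrite memS /= eqxx andbT.
by case: eqP vS => //= _ vS; lia.
Qed.

Lemma gale_le_single_top n q c (S : {set 'I_n}) : q.+1 + c <= n ->
  (forall i : 'I_n, (i \in S) = (val i == q) || (n - c <= i)) ->
  forall B : {set 'I_n}, gale_le B S = hits_prefix q.+1 c.+1 B.
Proof.
move=> qcn memS B; have enumS := map_val_enum_single_top qcn memS.
rewrite /gale_le /hits_prefix !sorted_elemsE enumS.
have -> : #|S| = c.+1 by rewrite cardE -(size_map val) enumS /= size_iota.
case: eqP => cardB //=.
have := sorted_ltn_enum B; have := mem_map_val_enum B.
have sizeB : size (map val (enum B)) = c.+1 by rewrite size_map -cardE.
have B_lt_n : all (fun v => v < n) (map val (enum B)).
  apply/allP => v; rewrite mem_map_val_enum => /existsP[j /andP[_ /eqP <-]].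
  exact: ltn_ord.
case: (map val (enum B)) sizeB B_lt_n => [|x s] //= [sizes] /andP[_ s_lt_n].
move=> memB sorted_xs.
rewrite -sizes all2_leq_top_iota ?(path_sorted sorted_xs) // andbT.
apply/idP/existsP => [xq|[j /andP[jq jB]]].
  have /existsP[j /andP[jB /eqP jx]] : [exists j : 'I_n, (j \in B) && (val j == x)].
    by rewrite -memB inE eqxx.
  by exists j; rewrite jB jx ltnS xq.
have : val j \in x :: s by rewrite memB; apply/existsP; exists j; rewrite jB eqxx.
rewrite inE => /orP[/eqP <- //|js].
have /allP/(_ _ js)/ltnW xj := order_path_min ltn_trans sorted_xs.
exact: leq_trans xj jq.
Qed.

(** * Lattice points of the dilate *)

(* For i < t, [res_count t i P] is the number of m < P with m = i mod t. *)
Definition res_count (t i P : nat) : nat := (P + t.-1 - i) %/ t.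

Section ResidueCount.
Variable t : nat.

Lemma res_count_leq i P Q : P <= Q -> res_count t i P <= res_count t i Q.
Proof. by move=> PQ; apply: leq_div2r; rewrite leq_sub2r ?leq_add2r. Qed.

Hypothesis t_gt0 : 0 < t.

Lemma res_count_addn_leq i P y : y <= t -> res_count t i (P + y) <= (res_count t i P).+1.
Proof.
move=> yt; apply: (@leq_trans ((1 * t + (P + t.-1 - i)) %/ t)).
  by apply: leq_div2r; lia.
by rewrite divnMDl // add1n.
Qed.

Lemma res_count_muln i k : i < t -> res_count t i (t * k) = k.
Proof.
move=> it; rewrite /res_count.
have -> : t * k + t.-1 - i = k * t + (t.-1 - i) by lia.
by rewrite divnMDl // divn_small ?addn0; lia.
Qed.

Lemma res_count0 i : i < t -> res_count t i 0 = 0.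
Proof. by move=> it; rewrite /res_count divn_small; lia. Qed.

Lemma res_count_gt0 i P : i < t -> t <= P -> 0 < res_count t i P.
Proof.
move=> it tP; have := @res_count_leq i (t * 1) P.
by rewrite res_count_muln // muln1; apply.
Qed.

Lemma sum_res_count P : \sum_(i < t) res_count t i P = P.
Proof.
have countE i : i < t -> res_count t i P = P %/ t + (i < P %% t).
  move=> it; rewrite /res_count.
  have -> : P + t.-1 - i = P %/ t * t + (P %% t + t.-1 - i).
    by rewrite {1}(divn_eq P t); lia.
  rewrite divnMDl //; congr (_ + _).
  have Pt : P %% t < t by rewrite ltn_mod.
  case: ltnP => iP; last by rewrite divn_small; lia.
  have -> : P %% t + t.-1 - i = 1 * t + (P %% t - i.+1) by lia.
  by rewrite divnMDl // divn_small; lia.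
have sum_ltr r : r <= t -> \sum_(i < t) (i < r : nat) = r.
  move=> rt; transitivity (\sum_(i < t | i < r) 1).
    by rewrite [RHS]big_mkcond; apply: eq_bigr => i _; case: (i < r).
  by rewrite -(big_ord_widen _ (fun=> 1)) // sum_nat_const card_ord muln1.
rewrite (eq_bigr _ (fun (i : 'I_t) _ => countE i (ltn_ord i))) big_split /=.
rewrite sum_nat_const card_ord sum_ltr; last by apply/ltnW; rewrite ltn_mod.
by rewrite mulnC -divn_eq.
Qed.
End ResidueCount.

Definition nat_ext n (x : 'I_n -> nat) (l : nat) : nat :=
  if insub l is Some o then x o else 0.

Definition prefix_sum n (x : 'I_n -> nat) (p : nat) : nat := \sum_(l < p) nat_ext x l.

(* Lay the coordinates of x out as consecutive blocks of [0, \sum_j x j); the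
   i-th slice collects the blocks containing a position congruent to i mod t.
   When every x j <= t, a block meets each residue class at most once, so the
   indicator vectors of the t slices add up to x. *)
Definition residue_slice n (x : 'I_n -> nat) (t i : nat) : {set 'I_n} :=
  [set j : 'I_n | res_count t i (prefix_sum x j) < res_count t i (prefix_sum x j.+1)].

Section ResidueSlices.
Variables (n t : nat) (x : 'I_n -> nat).
Hypotheses (t_gt0 : 0 < t) (x_le_t : forall j, x j <= t).

Lemma nat_ext_ord (j : 'I_n) : nat_ext x j = x j.
Proof. by rewrite /nat_ext valK. Qed.

Lemma nat_ext_le l : nat_ext x l <= t.
Proof. by rewrite /nat_ext; case: insub. Qed.

Lemma prefix_sum0 : prefix_sum x 0 = 0.
Proof. by rewrite /prefix_sum big_ord0. Qed.

Lemma prefix_sumS p : prefix_sum x p.+1 = prefix_sum x p + nat_ext x p.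
Proof. by rewrite /prefix_sum big_ord_recr. Qed.

Lemma prefix_sumE p : p <= n -> prefix_sum x p = \sum_(j < n | j < p) x j.
Proof.
move=> pn; rewrite /prefix_sum (big_ord_widen n _ pn).
by apply: eq_bigr => j _; rewrite nat_ext_ord.
Qed.

Lemma prefix_sum_total : prefix_sum x n = \sum_j x j.
Proof. by rewrite prefix_sumE //; apply: eq_bigl => j; rewrite ltn_ord. Qed.

Lemma res_count_prefix_telescope i p : i < t ->
  \sum_(l < p) (res_count t i (prefix_sum x l.+1) - res_count t i (prefix_sum x l))
  = res_count t i (prefix_sum x p).
Proof.
move=> it; rewrite -(big_mkord xpredT
  (fun l => res_count t i (prefix_sum x l.+1) - res_count t i (prefix_sum x l))).
rewrite telescope_sumn_in // ?prefix_sum0 ?res_count0 ?subn0 // => l _.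
by apply: res_count_leq; rewrite prefix_sumS leq_addr.
Qed.

Lemma mem_residue_slice i (j : 'I_n) :
  (j \in residue_slice x t i : nat)
  = res_count t i (prefix_sum x j.+1) - res_count t i (prefix_sum x j).
Proof.
rewrite inE prefix_sumS.
have := res_count_addn_leq t_gt0 i (prefix_sum x j) (nat_ext_le j).
have := @res_count_leq t i _ _ (leq_addr (nat_ext x j) (prefix_sum x j)).
case: ltnP => /=; lia.
Qed.

Lemma card_residue_slice i k : i < t -> \sum_j x j = t * k -> #|residue_slice x t i| = k.
Proof.
move=> it sum_x; rewrite card_sum_indicator.
under eq_bigr do rewrite mem_residue_slice.
by rewrite res_count_prefix_telescope // prefix_sum_total sum_x res_count_muln.
Qed.

Lemma residue_slice_hits_prefix i p : i < t -> p <= n -> t <= \sum_(j < n | j < p) x j ->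
  [exists j : 'I_n, (j < p) && (j \in residue_slice x t i)].
Proof.
move=> it pn t_le_sum.
have : 0 < \sum_(j < n | j < p) (j \in residue_slice x t i : nat).
  under eq_bigr do rewrite mem_residue_slice.
  rewrite -(big_ord_widen n
    (fun l => res_count t i (prefix_sum x l.+1) - res_count t i (prefix_sum x l)) pn).
  by rewrite res_count_prefix_telescope // res_count_gt0 // prefix_sumE.
rewrite lt0n sum_nat_eq0 negb_forall => /existsP[j]; rewrite negb_imply => /andP[jp jB].
by apply/existsP; exists j; rewrite jp; case: (j \in _) jB.
Qed.

Lemma sum_mem_residue_slice (j : 'I_n) : \sum_(i < t) (j \in residue_slice x t i : nat) = x j.
Proof.
under eq_bigr do rewrite mem_residue_slice.
rewrite sumnB; last by move=> i _; apply: res_count_leq; rewrite prefix_sumS leq_addr.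
by rewrite !sum_res_count // prefix_sumS nat_ext_ord addKn.
Qed.
End ResidueSlices.

Local Notation RR := Rdefinitions.R.

Lemma in_dilate_sum n (isB : {set 'I_n} -> bool) t (x : 'I_n -> nat)
    (lam : {set 'I_n} -> RR) (P : pred 'I_n) :
  (forall j, (x j)%:R = t%:R * \sum_(B | isB B) lam B * (j \in B)%:R :> RR)%R ->
  ((\sum_(j | P j) x j)%N%:R
    = t%:R * \sum_(B | isB B) lam B * (\sum_(j | P j) (j \in B : nat))%N%:R :> RR)%R.
Proof.
move=> xE; rewrite natr_sum; under eq_bigr do rewrite xE.
rewrite -mulr_sumr exchange_big /=; congr (_ * _)%R; apply: eq_bigr => B _.
by rewrite -mulr_sumr natr_sum.
Qed.

Section DilateOfPrefixMatroid.
Local Open Scope ring_scope.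
Variables (n p k t : nat) (isB : {set 'I_n} -> bool) (x : 'I_n -> nat).
Hypotheses (p_le_n : (p <= n)%N) (t_gt0 : (0 < t)%N) (x_le_t : forall j, (x j <= t)%N).
Hypothesis isBE : isB =1 hits_prefix p k.

Lemma in_dilate_hits_prefix :
  in_dilate isB t x -> (\sum_j x j = t * k /\ t <= \sum_(j < n | j < p) x j)%N.
Proof.
case=> lam [lam_ge0 [lam_supp [sum_lam xE]]].
have sum_lamB : \sum_(B | isB B) lam B = 1 :> RR.
  rewrite -sum_lam big_mkcond /=; apply: eq_bigr => B _.
  by case: (boolP (isB B)) => // /lam_supp ->.
split.
  apply/eqP; rewrite -(eqr_nat RR) (in_dilate_sum predT xE).
  rewrite (eq_bigr (fun B => lam B * k%:R)); last first.
    by move=> B; rewrite isBE => /andP[/eqP <- _]; rewrite card_sum_indicator.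
  by rewrite -mulr_suml sum_lamB mul1r natrM.
rewrite -(ler_nat RR) (in_dilate_sum (fun j : 'I_n => j < p)%N xE).
rewrite -[X in X <= _]mulr1 -[X in _ * X <= _]sum_lamB.
apply: ler_wpM2l; first exact: ler0n.
apply: ler_sum => B; rewrite isBE => /andP[_ /existsP[j /andP[jp jB]]].
rewrite -[X in X <= _]mulr1; apply: ler_wpM2l; first exact: lam_ge0.
rewrite ler1n lt0n sum_nat_eq0 negb_forall; apply/existsP; exists j.
by rewrite jp jB.
Qed.

(* Witness: lam B = #{i < t | residue_slice x t i = B} / t. *)
Lemma hits_prefix_in_dilate :
  (\sum_j x j = t * k -> t <= \sum_(j < n | j < p) x j -> in_dilate isB t x)%N.
Proof.
move=> sum_x prefix_x.
have sliceB (i : 'I_t) : isB (residue_slice x t i).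
  by rewrite isBE /hits_prefix (card_residue_slice t_gt0 x_le_t (ltn_ord i) sum_x) eqxx
    residue_slice_hits_prefix.
have t_neq0 : t%:R != 0 :> RR by rewrite pnatr_eq0 -lt0n.
have sum_at (i : 'I_t) (g : {set 'I_n} -> RR) :
    \sum_B (residue_slice x t i == B)%:R * g B = g (residue_slice x t i).
  rewrite (bigD1 (residue_slice x t i)) //= eqxx mul1r big1 ?addr0 // => B.
  by rewrite eq_sym => /negbTE ->; rewrite mul0r.
have lam_supp B : ~~ isB B -> \sum_(i < t) (residue_slice x t i == B)%:R = 0 :> RR.
  move=> notB; rewrite big1 // => i _.
  by case: eqP => // sliceE; move: notB; rewrite -sliceE sliceB.
exists (fun B => t%:R^-1 * \sum_(i < t) (residue_slice x t i == B)%:R).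
split; [|split; [|split]].
- by move=> B; rewrite mulr_ge0 ?invr_ge0 ?ler0n ?sumr_ge0.
- by move=> B /lam_supp ->; rewrite mulr0.
- rewrite -mulr_sumr exchange_big /=.
  rewrite (eq_bigr (fun=> 1)) ?sumr_const ?card_ord ?mulVf // => i _.
  by rewrite -[RHS](sum_at i (fun=> 1)); apply: eq_bigr => B _; rewrite mulr1.
move=> j; rewrite big_mkcond /= (eq_bigr (fun B =>
  t%:R^-1 * (\sum_(i < t) (residue_slice x t i == B)%:R) * (j \in B)%:R)); last first.
  by move=> B _; case: (boolP (isB B)) => // /lam_supp ->; rewrite mulr0 mul0r.
under eq_bigr do rewrite -mulrA mulr_suml.
rewrite -mulr_sumr exchange_big /=.
under eq_bigr do rewrite (sum_at _ (fun B => (j \in B)%:R)).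
by rewrite -natr_sum sum_mem_residue_slice // mulrA mulfV // mul1r.
Qed.
End DilateOfPrefixMatroid.

(** * Slices of a box *)

Definition ffun_cons (T : Type) m (u : T) (g : {ffun 'I_m -> T}) : {ffun 'I_m.+1 -> T} :=
  [ffun i => if unlift ord0 i is Some j then g j else u].

Lemma ffun_cons0 (T : Type) m (u : T) (g : {ffun 'I_m -> T}) : ffun_cons u g ord0 = u.
Proof. by rewrite ffunE unlift_none. Qed.

Lemma ffun_consS (T : Type) m (u : T) (g : {ffun 'I_m -> T}) j :
  ffun_cons u g (lift ord0 j) = g j.
Proof. by rewrite ffunE liftK. Qed.

Lemma big_ffun_cons (T : finType) m (F : {ffun 'I_m.+1 -> T} -> nat) :
  \sum_f F f = \sum_(u : T) \sum_(g : {ffun 'I_m -> T}) F (ffun_cons u g).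
Proof.
rewrite pair_big /= (reindex (fun ug : T * {ffun 'I_m -> T} => ffun_cons ug.1 ug.2)) //.
exists (fun f : {ffun 'I_m.+1 -> T} => (f ord0, [ffun j => f (lift ord0 j)])).
  move=> [u g] _ /=; rewrite ffun_cons0; congr (_, _).
  by apply/ffunP => j; rewrite ffunE ffun_consS.
move=> f _; apply/ffunP => i; rewrite ffunE.
by case: unliftP => [j ->|->]; rewrite ?ffunE.
Qed.

Lemma sum_ffun_cons t m (u : 'I_t.+1) (g : {ffun 'I_m -> 'I_t.+1}) :
  \sum_(i < m.+1) (ffun_cons u g i : nat) = u + \sum_(i < m) (g i : nat).
Proof.
by rewrite big_ord_recl ffun_cons0; congr (_ + _); apply: eq_bigr => i _; rewrite ffun_consS.
Qed.

Definition box_slice (t m s : nat) : nat :=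
  #|[set f : {ffun 'I_m -> 'I_t.+1} | \sum_(i < m) (f i : nat) == s]|.

Lemma box_slice0 t s : box_slice t 0 s = (s == 0).
Proof.
rewrite /box_slice card_sum_indicator (eq_bigr (fun=> (0 == s) : nat)) => [|f _].
  by rewrite sum_nat_const card_ffun !card_ord mul1n eq_sym.
by rewrite inE big_ord0.
Qed.

Lemma box_sliceS t m s :
  box_slice t m.+1 s = \sum_(u < t.+1) (u <= s) * box_slice t m (s - u).
Proof.
rewrite /box_slice card_sum_indicator big_ffun_cons; apply: eq_bigr => u _.
rewrite card_sum_indicator big_distrr /=; apply: eq_bigr => g _; rewrite !inE sum_ffun_cons.
case: leqP => us; rewrite ?mul1n ?mul0n.
  by rewrite -[_ == s - u](eqn_add2l u) subnKC.
by case: eqP => //; lia.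
Qed.

Definition ffun_rev t m (f : {ffun 'I_m -> 'I_t.+1}) : {ffun 'I_m -> 'I_t.+1} :=
  [ffun i => rev_ord (f i)].

Lemma ffun_revK t m : involutive (@ffun_rev t m).
Proof. by move=> f; apply/ffunP => i; rewrite !ffunE rev_ordK. Qed.

Lemma sum_ffun_rev t m (f : {ffun 'I_m -> 'I_t.+1}) :
  \sum_(i < m) (ffun_rev f i : nat) + \sum_(i < m) (f i : nat) = t * m.
Proof.
rewrite -big_split /= -[m in t * m]card_ord mulnC -sum_nat_const.
by apply: eq_bigr => i _; rewrite ffunE /= subSS subnK // -ltnS.
Qed.

Lemma box_slice_sym t m s : s <= t * m -> box_slice t m s = box_slice t m (t * m - s).
Proof.
move=> s_le; rewrite /box_slice -(card_imset _ (inv_inj (@ffun_revK t m))).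
apply: eq_card => f; rewrite inE.
rewrite -[f in LHS](ffun_revK f) mem_imset ?inE; last exact: (inv_inj (@ffun_revK t m)).
by have := sum_ffun_rev f; move: (\sum_i _) (\sum_i _) => P Q PQ; apply/eqP/eqP; lia.
Qed.

Lemma box_sliceS_geq t m s : t <= s ->
  box_slice t m.+1 s = \sum_(u < t.+1) box_slice t m (s - u).
Proof.
move=> ts; rewrite box_sliceS; apply: eq_bigr => u _.
by rewrite (leq_trans _ ts) ?mul1n // -ltnS.
Qed.

Definition box_slice_head2 (n t s : nat) : nat :=
  #|[set x : {ffun 'I_n -> 'I_t.+1} |
     (\sum_(j < n) (x j : nat) == s) && (t <= \sum_(j < n | j < 2) (x j : nat))]|.

Lemma box_slice_head2E m t s : box_slice_head2 m.+2 t s =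
  \sum_(u < t.+1) \sum_(v < t.+1) (t <= u + v) * ((u + v <= s) * box_slice t m (s - (u + v))).
Proof.
rewrite /box_slice_head2 card_sum_indicator big_ffun_cons; apply: eq_bigr => u _.
rewrite big_ffun_cons; apply: eq_bigr => v _.
rewrite /box_slice card_sum_indicator !big_distrr /=; apply: eq_bigr => g _; rewrite !inE.
have -> : \sum_(j < m.+2 | j < 2) (ffun_cons u (ffun_cons v g) j : nat) = u + v.
  rewrite big_mkcond !big_ord_recl /= ffun_cons0 /bump /= ffun_consS ffun_cons0.
  by rewrite big1 ?addn0.
rewrite !sum_ffun_cons addnA.
case: (leqP t (u + v)) => tuv; rewrite ?mul1n ?mul0n ?andbF //= andbT.
case: leqP => uvs; rewrite ?mul1n ?mul0n.
  by rewrite -[_ == s - (u + v)](eqn_add2l (u + v)) subnKC.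
by rewrite eqn_leq leqNgt ltn_addr.
Qed.

Lemma sum_pairs_geq t u (g : nat -> nat) : u <= t ->
  \sum_(v < t.+1) (t <= u + v) * g (u + v - t) = \sum_(w < u.+1) g w.
Proof.
move=> ut; rewrite -(big_mkord xpredT (fun v => (t <= u + v) * g (u + v - t))).
rewrite -(big_mkord xpredT g) (@big_cat_nat _ _ _ (t - u)) //=; last lia.
rewrite big_nat_cond big1 ?add0n => [|v /andP[/andP[_ vtu] _]]; last first.
  by have -> : (t <= u + v) = false by lia.
rewrite -{1}[t - u]add0n big_addn.
have -> : t.+1 - (t - u) = u.+1 by lia.
apply: eq_big_nat => v _.
have -> : u + (v + (t - u)) - t = v by lia.
have -> : (t <= u + (v + (t - u))) = true by lia.
by rewrite mul1n.
Qed.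

Lemma sum_pairs_leq t u (g : nat -> nat) : u <= t ->
  \sum_(v < t.+1) (u + v <= t) * g (u + v) = \sum_(u <= w < t.+1) g w.
Proof.
move=> ut; rewrite -(big_mkord xpredT (fun v => (u + v <= t) * g (u + v))).
rewrite (@big_cat_nat _ _ _ (t - u).+1) //=; last lia.
rewrite [X in _ + X]big_nat_cond [X in _ + X]big1 ?addn0 => [|v /andP[/andP[tuv _] _]]; last first.
  by have -> : (u + v <= t) = false by lia.
have -> : \sum_(u <= w < t.+1) g w = \sum_(0 <= w < (t - u).+1) g (w + u).
  by rewrite -{1}[u]add0n big_addn (_ : t.+1 - u = (t - u).+1) //; lia.
apply: eq_big_nat => v /andP[_ vtu].
have -> : (u + v <= t) = true by lia.
by rewrite mul1n addnC.
Qed.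

(* For fixed u the two inner sums run over g 0, ..., g u and g u, ..., g t. *)
Lemma sum_pairs_split t (g : nat -> nat) :
  \sum_(u < t.+1) \sum_(v < t.+1) (t <= u + v) * g (u + v - t) +
  \sum_(u < t.+1) \sum_(v < t.+1) (u + v <= t) * g (u + v) =
  t.+2 * \sum_(w < t.+1) g w.
Proof.
rewrite -big_split /= (eq_bigr (fun u : 'I_t.+1 => \sum_(w < t.+1) g w + g u)).
  by rewrite big_split /= sum_nat_const card_ord mulSn addnC.
move=> u _; have ut : u <= t by rewrite -ltnS.
rewrite sum_pairs_geq // sum_pairs_leq // -!(big_mkord xpredT g) big_nat_recr //=.
rewrite (@big_cat_nat _ _ _ u 0 t.+1) //=; last lia.
by rewrite addnAC.
Qed.

(** * Inclusion-exclusion *)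

Section InclusionExclusion.
Local Open Scope ring_scope.

Lemma binomZ_small (N K : int) : 0 <= K -> N < K -> binomZ N K = 0.
Proof. by move=> K_ge0 NK; rewrite /binomZ NK orbT. Qed.

Lemma binomZ0 (N : int) : binomZ N 0 = if N < 0 then 0 else 1.
Proof. by rewrite /binomZ /= bin0. Qed.

Lemma binomZS (N : int) (K : nat) : binomZ (N + 1) K.+1 = binomZ N K.+1 + binomZ N K.
Proof.
have [N_lt0|N_ge0] := ltrP N 0; first by rewrite !binomZ_small //; lia.
have [n ->] : exists n : nat, N = n%:Z by exists `|N|%N; lia.
rewrite /binomZ /=; case: (ltngtP n K) => nK.
- by rewrite !ifT //; lia.
- by rewrite !ifF ?addn1 ?binS ?PoszD 1?addrC //; lia.
- rewrite ifF; last lia. rewrite ifT; last lia. rewrite ifF; last lia.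
  by rewrite nK addn1 binS bin_small // addr0 add0r.
Qed.

Lemma sum_binomZ_hockey (N : int) (K t : nat) :
  \sum_(w < t.+1) binomZ (N - w%:Z) K = binomZ (N + 1) K.+1 - binomZ (N - t%:Z) K.+1.
Proof.
elim: t => [|t IH]; first by rewrite big_ord1 subr0 binomZS addrAC subrr add0r.
rewrite big_ord_recr /= IH.
have -> : N - t%:Z = (N - t.+1%:Z) + 1 by rewrite -addn1 PoszD; ring.
by rewrite (binomZS (N - t.+1%:Z)); ring.
Qed.

Definition box_slice_ie (t m : nat) (s : int) : int :=
  \sum_(j < m.+1) (-1) ^+ j * ('C(m, j))%:Z *
     binomZ (s + m%:Z - 1 - (j * t.+1)%:Z) (m%:Z - 1).

Lemma box_slice_ie_neg t m (s : int) : s < 0 -> box_slice_ie t m.+1 s = 0.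
Proof.
by move=> s_lt0; rewrite /box_slice_ie big1 // => j _; rewrite binomZ_small ?mulr0 //; lia.
Qed.

Lemma sum_box_slice_ie t m (s : int) :
  \sum_(w < t.+1) box_slice_ie t m.+1 (s - w%:Z) = box_slice_ie t m.+2 s.
Proof.
pose T j := binomZ (s + m.+1%:Z - (j * t.+1)%:Z) m.+1%:Z.
have -> : \sum_(w < t.+1) box_slice_ie t m.+1 (s - w%:Z) =
    \sum_(j < m.+2) (-1) ^+ j * ('C(m.+1, j))%:Z * (T j - T j.+1).
  rewrite /box_slice_ie exchange_big /=; apply: eq_bigr => j _; rewrite -mulr_sumr.
  congr (_ * _).
  transitivity (\sum_(w < t.+1) binomZ (s + m%:Z - (j * t.+1)%:Z - w%:Z) m).
    by apply: eq_bigr => w _; congr binomZ; rewrite !(PoszM, PoszD, intS); ring.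
  rewrite sum_binomZ_hockey; congr (binomZ _ _ - binomZ _ _);
    rewrite !(PoszM, PoszD, intS); ring.
have -> : box_slice_ie t m.+2 s = \sum_(j < m.+3) (-1) ^+ j * ('C(m.+2, j))%:Z * T j.
  by apply: eq_bigr => j _; congr (_ * binomZ _ _); rewrite /T !(PoszM, PoszD, intS); ring.
under eq_bigr do rewrite mulrBr.
rewrite sumrB big_ord_recl [RHS]big_ord_recl /=.
under [in RHS]eq_bigr do rewrite /bump /= binS PoszD mulrDr mulrDl.
rewrite big_split /= [X in _ = _ + (X + _)]big_ord_recr /=.
rewrite (bin_small (ltnSn m.+1)) mulr0 mul0r addr0.
have -> : \sum_(i < m.+2) (-1) ^+ i * ('C(m.+1, i))%:Z * T i.+1 =
    - \sum_(i < m.+2) (-1) ^+ i.+1 * ('C(m.+1, i))%:Z * T i.+1.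
  by rewrite -sumrN; apply: eq_bigr => i _; rewrite exprS; ring.
rewrite !bin0 opprK; under eq_bigr do rewrite /bump /= add1n.
by under [X in _ = _ + (_ + X)]eq_bigr do rewrite add1n; rewrite addrA.
Qed.

Lemma sum_ord_eq t s : (\sum_(u < t.+1) (u == s :> nat) = (s <= t))%N.
Proof.
case: (ltnP s t.+1) => st.
  rewrite (bigD1 (Ordinal st)) //= eqxx big1 ?addn0 => [|u /negbTE]; first by rewrite -ltnS st.
  by rewrite -(inj_eq val_inj) /= => ->.
rewrite big1 => [|u _]; first by rewrite -ltnS ltnNge st.
by have := ltn_ord u; case: eqP => //= ->; lia.
Qed.

Lemma box_sliceE t m s : (box_slice t m.+1 s)%:Z = box_slice_ie t m.+1 s%:Z.
Proof.
elim: m s => [|m IH] s.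
  rewrite box_sliceS (eq_bigr (fun u : 'I_t.+1 => (val u == s : nat))) => [|u _]; last first.
    by rewrite box_slice0; case: leqP => us /=; case: eqP; case: eqP => //; lia.
  rewrite sum_ord_eq /box_slice_ie big_ord_recr big_ord1 /= subrr !binomZ0.
  rewrite ifF; last lia.
  by case: leqP => st; [rewrite ifT | rewrite ifF] => //; lia.
rewrite box_sliceS -sum_box_slice_ie (big_morph Posz PoszD (erefl _)).
apply: eq_bigr => u _; case: leqP => us; first by rewrite mul1n IH -subzn.
by rewrite mul0n box_slice_ie_neg //; lia.
Qed.

End InclusionExclusion.

(** * The two Schubert matroids *)

Lemma mem_r_set_11 p q (i : 'I_(sumn [:: 1; 1; p; q])) :
  (i \in r_set [:: 1; 1; p; q]) = (val i == 1) || (p.+2 <= i).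
Proof.
rewrite /r_set inE /r_word /= cats0.
have := ltn_ord i; rewrite /=.
case: i => [[|[|i]]] //= _ ilt.
rewrite nth_cat size_nseq nth_nseq; case: ltnP => ip; first by apply/esym/negbTE; lia.
by rewrite nth_nseq ifT; lia.
Qed.

Lemma i_schubert_single_top n c (S : {set 'I_n}) t : c.+2 <= n -> 0 < t ->
  (forall i : 'I_n, (i \in S) = (val i == 1) || (n - c <= i)) ->
  i_schubert S t = box_slice_head2 n t (t * c.+1).
Proof.
move=> cn t_gt0 memS; apply: eq_card => x; rewrite !inE.
have x_le_t j : x j <= t by rewrite -ltnS.
have isBE := @gale_le_single_top n 1 c S cn memS.
have n2 : 2 <= n by apply: leq_trans cn.
apply/asboolP/andP => [/(in_dilate_hits_prefix isBE) [-> ->]|].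
  by rewrite eqxx.
by case=> /eqP sum_x; apply: (hits_prefix_in_dilate n2 t_gt0 x_le_t isBE).
Qed.

Lemma i_r_11 p q t : 0 < t -> i_r [:: 1; 1; p; q] t = box_slice_head2 (p + q).+2 t (t * q.+1).
Proof.
move=> t_gt0; rewrite /i_r (@i_schubert_single_top _ q) //=; first by congr box_slice_head2; lia.
- lia.
- by move=> i; rewrite mem_r_set_11 /=; congr orb; congr leq; lia.
Qed.

Lemma box_slice_head2_geq m b t : 0 < b ->
  box_slice_head2 m.+2 t (t * b.+1) =
  \sum_(u < t.+1) \sum_(v < t.+1) (t <= u + v) * box_slice t m (t * b - (u + v - t)).
Proof.
move=> b_gt0; rewrite box_slice_head2E; apply: eq_bigr => u _; apply: eq_bigr => v _.
have := ltn_ord u; have := ltn_ord v; have : t <= t * b by rewrite leq_pmulr.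
rewrite mulnS; move: (t * b) => tb tb_ge u_le v_le.
case: (leqP t (u + v)) => tuv; rewrite ?mul0n // mul1n.
by rewrite (_ : u + v <= t + tb) ?mul1n; [congr box_slice | ]; lia.
Qed.

(* Reversing all coordinates turns the sum t (a + 2) into t b and the condition
   u + v >= t on the first two into u + v <= t. *)
Lemma box_slice_head2_leq a b t : 0 < b ->
  box_slice_head2 (a + b).+2 t (t * a.+2) =
  \sum_(u < t.+1) \sum_(v < t.+1) (u + v <= t) * box_slice t (a + b) (t * b - (u + v)).
Proof.
move=> b_gt0; rewrite box_slice_head2E (reindex_inj rev_ord_inj); apply: eq_bigr => u _.
rewrite (reindex_inj rev_ord_inj); apply: eq_bigr => v _ /=.
have := ltn_ord u; have := ltn_ord v; have : t <= t * b by rewrite leq_pmulr.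
move=> tb u_le v_le.
case: (leqP (u + v) t) => uvt; last first.
  by rewrite (_ : t <= _ = false) //; lia.
rewrite (_ : t <= _ = true) ?mul1n; last lia.
rewrite (_ : _ <= t * a.+2 = true) ?mul1n; last by rewrite !mulnS; lia.
rewrite box_slice_sym; last by rewrite !mulnS mulnDr; lia.
by congr box_slice; rewrite !mulnS mulnDr; lia.
Qed.

Local Open Scope ring_scope.

Lemma F_box_slice_ie a b t : F a.+1 b 0 t = box_slice_ie t (a + b).+1 (t * b)%N%:Z.
Proof.
rewrite /F /box_slice_ie addSn; apply: eq_bigr => j _.
by congr (_ * binomZ _ _); rewrite !(PoszM, PoszD, intS); ring.
Qed.

Theorem corollary4p3 (a b t : nat) :
  (1 <= a)%N -> (2 <= b)%N -> (0 < t)%N ->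
  ((i_r [:: 1; 1; a; b]%N t + i_r [:: 1; 1; b.-1; a.+1]%N t)%N)%:Z
    = (t.+2)%:Z * F a.+1 b 0 t.
Proof.
move=> _ b_ge2 t_gt0; have b_gt0 : (0 < b)%N by apply: ltnW.
rewrite !i_r_11 // (_ : b.-1 + a.+1 = a + b)%N; last lia.
rewrite box_slice_head2_geq // box_slice_head2_leq //.
rewrite (sum_pairs_split t (fun w => box_slice t (a + b) (t * b - w))).
by rewrite -box_sliceS_geq ?leq_pmulr // PoszM box_sliceE F_box_slice_ie.
Qed.
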